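(* Let $D$ be a rooted hyperbolic digraph with root $o$, constant out-degree and bounded in-degree. Let $g$ be an elliptic self-embedding of $D$ and let $n\in\mathbb{N}$. Then there exists an integer $i\ge1$ such that $g^i$ fixes every vertex of $\mathcal{B}^+_n(o)\cup\mathcal{B}^-_n(o)$.
   Context: A directed path $x_0\ldots x_n$ has edges $x_ix_{i+1}$; $d(x,y)$ is the length of a shortest directed $x$-$y$ path ($\infty$ if none), called an $x$-$y$ geodesic. $D$ is rooted with root $o$ if $d(o,v)<\infty$ for all $v$. $\mathcal{B}^+_k(x)=\{y:d(x,y)\le k\}$, $\mathcal{B}^-_k(x)=\{y:d(y,x)\le k\}$, extended to sets by unions. A geodesic triangle consists of three vertices and for each pair a geodesic between them (in one direction); it is $\delta$-thin if whenever $P,Q,R$ are its sides with the start of $P$ being the start or end of $Q$ and the end of $P$ being the start or end of $R$, $P\subseteq\mathcal{B}^+_\delta(Q)\cup\mathcal{B}^-_\delta(R)$; $D$ is hyperbolic if for some $\delta\ge0$ all geodesic triangles are $\delta$-thin. A self-embedding is an injective $g:V(D)\to V(D)$ with $xy\in E(D)\iff g(x)g(y)\in E(D)$; it is elliptic if $g(F)=F$ for some nonempty finite vertex set $F$. *)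

From Stdlib Require Import List Arith Lia.
Import ListNotations.
Set Implicit Arguments.

Section Digraphs.
Variable V : Type.
Variable E : V -> V -> Prop.

Inductive walk : list V -> Prop :=
| walk_one : forall x, walk [x]
| walk_cons : forall x y p, E x y -> walk (y :: p) -> walk (x :: y :: p).

(* p is a directed x-y path; its length is (length p - 1). *)
Definition dpath (x y : V) (p : list V) : Prop :=
  walk p /\ hd_error p = Some x /\ hd_error (rev p) = Some y.

Definition dist_le (x y : V) (k : nat) : Prop :=
  exists p, dpath x y p /\ length p <= S k.

Definition geodesic (x y : V) (p : list V) : Prop :=
  dpath x y p /\ forall q, dpath x y q -> length p <= length q.

(* B^+_k(S) and B^-_k(S) for a set S given as a list of vertices *)
Definition in_Bout (k : nat) (S : list V) (v : V) : Prop :=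
  exists s, In s S /\ dist_le s v k.
Definition in_Bin (k : nat) (S : list V) (v : V) : Prop :=
  exists s, In s S /\ dist_le v s k.

Definition start (p : list V) : option V := hd_error p.
Definition finish (p : list V) : option V := hd_error (rev p).

Definition geodesic_between (x y : V) (p : list V) : Prop :=
  geodesic x y p \/ geodesic y x p.

Definition geo_triangle (x y z : V) (Pxy Pyz Pxz : list V) : Prop :=
  geodesic_between x y Pxy /\ geodesic_between y z Pyz /\
  geodesic_between x z Pxz.

(* the thinness condition for an ordered choice (P,Q,R) of the sides *)
Definition thin_sides (d : nat) (P Q R : list V) : Prop :=
  (start P = start Q \/ start P = finish Q) ->
  (finish P = start R \/ finish P = finish R) ->
  forall v, In v P -> in_Bout d Q v \/ in_Bin d R v.

Definition thin_triangle (d : nat) (P1 P2 P3 : list V) : Prop :=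
  thin_sides d P1 P2 P3 /\ thin_sides d P1 P3 P2 /\
  thin_sides d P2 P1 P3 /\ thin_sides d P2 P3 P1 /\
  thin_sides d P3 P1 P2 /\ thin_sides d P3 P2 P1.

Definition hyperbolic : Prop :=
  exists d : nat, forall x y z P1 P2 P3,
    geo_triangle x y z P1 P2 P3 -> thin_triangle d P1 P2 P3.

Definition rooted_at (o : V) : Prop := forall v, exists k, dist_le o v k.

Definition const_outdeg : Prop :=
  exists k : nat, forall v, exists l : list V,
    NoDup l /\ length l = k /\ (forall w, In w l <-> E v w).

Definition bounded_indeg : Prop :=
  exists M : nat, forall v, exists l : list V,
    length l <= M /\ (forall w, E w v -> In w l).

Definition self_embedding (g : V -> V) : Prop :=
  (forall x y, g x = g y -> x = y) /\ (forall x y, E x y <-> E (g x) (g y)).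

(* g(F) = F for some nonempty finite F *)
Definition elliptic (g : V -> V) : Prop :=
  exists F : list V, F <> [] /\
    (forall x, In x F -> In (g x) F) /\
    (forall y, In y F -> exists x, In x F /\ g x = y).

End Digraphs.

From Stdlib Require Import List Arith Lia Classical.
Import ListNotations.
Set Implicit Arguments.

(* Pick f in the finite set F with g(F) ⊆ F and let m = d(o, f).  As g preserves
   edges, it maps the in-ball B^-_m(F) into itself, and hence also the set X of
   vertices within distance n of that ball, in either direction; X contains
   B^+_n(o) ∪ B^-_n(o) because o ∈ B^-_m(F).  Locally finite degrees make X
   finite, so the injective map g permutes X and g^(|X|!) fixes X pointwise. *)

Lemma divide_fact n p : 1 <= p <= n -> Nat.divide p (fact n).
Proof.
  induction n as [|n IH]; intros Hp; [lia|].
  destruct (Nat.eq_dec p (S n)) as [->|Hne].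
  - exists (fact n); simpl; lia.
  - destruct IH as [q Hq]; [lia|].
    exists (S n * q); simpl fact; rewrite Hq; lia.
Qed.

Section Iteration.
Variable A : Type.
Variable g : A -> A.

Lemma iter_divide_fixed p i x :
  Nat.divide p i -> Nat.iter p g x = x -> Nat.iter i g x = x.
Proof.
  intros [q ->] Hp; induction q as [|q IH]; [reflexivity|].
  simpl; rewrite Nat.iter_add, IH; exact Hp.
Qed.

Hypothesis g_inj : forall x y, g x = g y -> x = y.

Lemma iter_inj n x y : Nat.iter n g x = Nat.iter n g y -> x = y.
Proof. induction n as [|n IH]; simpl; auto. Qed.

Lemma iter_returns (L : list A) x :
  (forall j, In (Nat.iter j g x) L) ->
  exists p, 1 <= p <= length L /\ Nat.iter p g x = x.
Proof.
  intros HL.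
  destruct (classic (exists a b, a < b <= length L /\
                       Nat.iter a g x = Nat.iter b g x)) as [[a [b [Hab Heq]]]|Hno].
  - exists (b - a); split; [lia|].
    apply (iter_inj a).
    rewrite <- Nat.iter_add, Heq; f_equal; lia.
  - set (orbit := map (fun j => Nat.iter j g x) (seq 0 (S (length L)))).
    assert (orbit_nodup : NoDup orbit).
    { apply NoDup_map_NoDup_ForallPairs; [|apply seq_NoDup].
      intros a b Ha Hb Heq; apply in_seq in Ha, Hb.
      destruct (lt_eq_lt_dec a b) as [[Hlt|]|Hlt]; auto;
        exfalso; apply Hno; [exists a, b | exists b, a]; split; auto; lia. }
    assert (orbit_incl : incl orbit L).
    { intros y Hy; apply in_map_iff in Hy as [j [<- _]]; apply HL. }
    pose proof (NoDup_incl_length orbit_nodup orbit_incl) as Hlen.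
    unfold orbit in Hlen; rewrite length_map, length_seq in Hlen; lia.
Qed.

Lemma iter_periodic_on (X : A -> Prop) (L : list A) :
  (forall x, X x -> X (g x)) -> (forall x, X x -> In x L) ->
  exists i, 1 <= i /\ forall x, X x -> Nat.iter i g x = x.
Proof.
  intros X_inv X_L.
  exists (fact (length L)); split; [apply lt_O_fact|].
  intros x Hx.
  destruct (iter_returns L x) as [p [Hp Hfix]].
  { intros j; apply X_L; induction j; simpl; auto. }
  exact (iter_divide_fixed (divide_fact Hp) Hfix).
Qed.

End Iteration.

Section Homomorphism.
Variables V W : Type.
Variable E : V -> V -> Prop.
Variable F : W -> W -> Prop.
Variable f : V -> W.
Hypothesis f_edge : forall x y, E x y -> F (f x) (f y).

Lemma walk_map p : walk E p -> walk F (map f p).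
Proof. induction 1; simpl; constructor; auto. Qed.

Lemma dist_le_map u v k : dist_le E u v k -> dist_le F (f u) (f v) k.
Proof.
  intros [p [[Hw [Hu Hv]] Hlen]].
  exists (map f p); repeat split.
  - apply walk_map; exact Hw.
  - destruct p; simpl in *; congruence.
  - rewrite <- map_rev; destruct (rev p); simpl in *; congruence.
  - rewrite length_map; exact Hlen.
Qed.

End Homomorphism.

Section Digraph.
Variable V : Type.
Variable E : V -> V -> Prop.

Definition finite_outdeg : Prop := forall v, exists l, forall w, E v w -> In w l.
Definition finite_indeg : Prop := forall v, exists l, forall w, E w v -> In w l.

Lemma const_outdeg_finite : const_outdeg E -> finite_outdeg.
Proof.
  intros [d Hd] v; destruct (Hd v) as [l [_ [_ Hl]]].
  exists l; intros w; apply Hl.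
Qed.

Lemma bounded_indeg_finite : bounded_indeg E -> finite_indeg.
Proof. intros [M HM] v; destruct (HM v) as [l [_ Hl]]; exists l; exact Hl. Qed.

Lemma hd_error_rev_cons (x : V) l :
  l <> [] -> hd_error (rev (x :: l)) = hd_error (rev l).
Proof.
  intros Hl; simpl; destruct (rev l) eqn:Hrev; [|reflexivity].
  apply (f_equal (@rev V)) in Hrev; rewrite rev_involutive in Hrev.
  simpl in Hrev; congruence.
Qed.

Lemma dist_le_0 u v : dist_le E u v 0 -> u = v.
Proof.
  intros [p [[_ [Hu Hv]] Hlen]].
  destruct p as [|x [|y q]]; simpl in *; try lia; congruence.
Qed.

Lemma dist_le_S u v k :
  dist_le E u v (S k) -> u = v \/ exists w, E u w /\ dist_le E w v k.
Proof.
  intros [p [[Hw [Hu Hv]] Hlen]].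
  inversion Hw as [x | x y q Hxy Hq]; subst; simpl in Hu; injection Hu as ->.
  - left; simpl in Hv; congruence.
  - right; exists y; split; [exact Hxy|].
    exists (y :: q); repeat split; [exact Hq | |simpl in *; lia].
    rewrite hd_error_rev_cons in Hv by discriminate; exact Hv.
Qed.

Lemma list_union_bound (R : V -> V -> Prop) :
  (forall a, exists l, forall b, R a b -> In b l) ->
  forall L, exists l, forall a b, In a L -> R a b -> In b l.
Proof.
  intros HR L; induction L as [|a L [l IH]].
  - exists []; intros a b [].
  - destruct (HR a) as [la Ha].
    exists (la ++ l); intros a' b [<-|Hin] Hab; apply in_or_app; eauto.
Qed.

Lemma in_Bout_finite : finite_outdeg ->
  forall k S, exists L, forall v, in_Bout E k S v -> In v L.
Proof.
  intros Hout k; induction k as [|k IH]; intros S.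
  - exists S; intros v [s [Hs Hd]]; apply dist_le_0 in Hd; subst; exact Hs.
  - destruct (list_union_bound E Hout S) as [N HN].
    destruct (IH N) as [L HL].
    exists (S ++ L); intros v [s [Hs Hd]]; apply in_or_app.
    apply dist_le_S in Hd as [->|[w [Hsw Hwv]]]; [left; exact Hs|].
    right; apply HL; exists w; split; [eapply HN|]; eauto.
Qed.

Lemma in_Bin_finite : finite_indeg ->
  forall k S, exists L, forall v, in_Bin E k S v -> In v L.
Proof.
  intros Hin k S; induction k as [|k [L HL]].
  - exists S; intros v [s [Hs Hd]]; apply dist_le_0 in Hd; subst; exact Hs.
  - destruct (list_union_bound (fun w v => E v w) Hin L) as [N HN].
    exists (S ++ N); intros v [s [Hs Hd]]; apply in_or_app.
    apply dist_le_S in Hd as [->|[w [Hvw Hws]]]; [left; exact Hs|].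
    right; apply (HN w); [apply HL; exists s|]; auto.
Qed.

Lemma in_Bin_stable (g : V -> V) k S v :
  (forall x y, E x y -> E (g x) (g y)) -> (forall x, In x S -> In (g x) S) ->
  in_Bin E k S v -> in_Bin E k S (g v).
Proof.
  intros g_edge gS [s [Hs Hd]]; exists (g s); split.
  - apply gS; exact Hs.
  - exact (dist_le_map _ _ g_edge Hd).
Qed.

End Digraph.

Theorem lemma3p14 (V : Type) (E : V -> V -> Prop) (o : V)
  (Hroot : rooted_at E o) (Hhyp : hyperbolic E)
  (Hout : const_outdeg E) (Hin : bounded_indeg E)
  (g : V -> V) (Hg : self_embedding E g) (Hell : elliptic g) (n : nat) :
  exists i : nat, 1 <= i /\
    forall v, (dist_le E o v n \/ dist_le E v o n) -> Nat.iter i g v = v.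
Proof.
  destruct Hg as [g_inj g_edge].
  assert (g_hom : forall x y, E x y -> E (g x) (g y)) by (intros x y; apply g_edge).
  destruct Hell as [F [F_nonempty [gF _]]].
  destruct F as [|f F]; [congruence|].
  destruct (Hroot f) as [m o_f].
  set (core := in_Bin E m (f :: F)).
  set (X := fun v => exists u, core u /\ (dist_le E u v n \/ dist_le E v u n)).
  assert (o_core : core o) by (exists f; split; [left|]; auto).
  destruct (in_Bin_finite (bounded_indeg_finite Hin) m (f :: F)) as [U HU].
  destruct (in_Bout_finite (const_outdeg_finite Hout) n U) as [Lout HLout].
  destruct (in_Bin_finite (bounded_indeg_finite Hin) n U) as [Lin HLin].
  destruct (iter_periodic_on g g_inj X (Lout ++ Lin)) as [i [Hi Hfix]].
  - intros v [u [Hu Huv]]; exists (g u); split.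
    + apply in_Bin_stable; assumption.
    + destruct Huv as [Huv|Hvu]; [left|right];
        apply (dist_le_map _ _ g_hom); assumption.
  - intros v [u [Hu [Huv|Hvu]]]; apply in_or_app; [left|right].
    + apply HLout; exists u; auto.
    + apply HLin; exists u; auto.
  - exists i; split; [exact Hi|].
    intros v Hv; apply Hfix; exists o; auto.
Qed.
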